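(* Let $\mathfrak g$ be an almost abelian Lie algebra with a Hermitian structure $(J,g)$ and let $e$ be an admissible frame with data $\lambda,v,A$. Then the Chern connection of $g$ is flat if and only if $\lambda=0$, $v=0$ and $[A,A^\ast]=0$.
   Context: Setup: Hermitian structure $(J,g)$ on a real Lie algebra $\mathfrak g$ of dimension $2n$ ($J$ integrable, $g$ a $J$-invariant inner product), viewed as a left-invariant Hermitian structure on the corresponding simply connected Lie group. $\mathfrak g^{1,0}=\{x-\sqrt{-1}Jx\}$; a unitary frame is a basis $e_1,\dots,e_n$ of $\mathfrak g^{1,0}$ with $g(e_i,\bar e_j)=\delta_{ij}$, dual coframe $\varphi_i$, $d$ the Chevalley–Eilenberg differential. $\mathfrak g$ is almost abelian if non-abelian with an abelian ideal of codimension one; an admissible frame is a unitary frame with $d\varphi_1=-\lambda\,\varphi_1\wedge\bar\varphi_1$, $d\varphi_i=-\bar v_i\,\varphi_1\wedge\bar\varphi_1+\sum_{j=2}^n\overline{A_{ij}}(\varphi_1+\bar\varphi_1)\wedge\varphi_j$ ($2\le i\le n$), $\lambda\in\mathbb R$, $v\in\mathbb C^{n-1}$, $A\in M_{n-1}(\mathbb C)$. The Chern connection is the unique connection preserving $J$ and $g$ whose torsion has vanishing $(1,1)$-part. *)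

From HB Require Import structures.
From mathcomp Require Import all_boot all_order all_algebra.
From mathcomp Require Import complex.
Set Implicit Arguments. Unset Strict Implicit. Unset Printing Implicit Defensive.
Import Order.TTheory GRing.Theory Num.Theory.
Local Open Scope ring_scope.

Section Hermitian.
Variables (R : rcfType) (m : nat).
Local Notation V := 'rV[R]_m.
Local Notation C := R[i].

Definition bilinear_map (f : V -> V -> V) :=
  (forall (a : R) x y z, f (a *: x + y) z = a *: f x z + f y z) /\
  (forall (a : R) x y z, f z (a *: x + y) = a *: f z x + f z y).

Definition is_lie_bracket (br : V -> V -> V) :=
  bilinear_map br /\ (forall x, br x x = 0) /\
  (forall x y z, br x (br y z) + br y (br z x) + br z (br x y) = 0).

Definition ip (G : 'M[R]_m) (x y : V) : R := (x *m G *m y^T) 0 0.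

(* (J,g) Hermitian structure: J complex structure (J^2=-1), integrable
   (Nijenhuis tensor vanishes), g inner product with g(Jx,Jy)=g(x,y).
   J acts on x by x *m J. *)
Definition hermitian_structure (br : V -> V -> V) (J G : 'M[R]_m) :=
  [/\ J *m J = - 1%:M,
      (forall x y, br (x *m J) (y *m J) - br x y - br (x *m J) y *m J
                   - br x (y *m J) *m J = 0),
      G^T = G,
      (forall x, x != 0 -> 0 < ip G x x) &
      (forall x y, ip G (x *m J) (y *m J) = ip G x y)].

(* almost abelian: non-abelian, with an abelian ideal of codimension one
   (the ideal is the row space of h) *)
Definition almost_abelian (br : V -> V -> V) :=
  (exists x y, br x y != 0) /\
  exists h : 'M[R]_m,
    [/\ \rank h = m.-1,
        (forall x y, (y <= h)%MS -> (br x y <= h)%MS) &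
        (forall x y, (x <= h)%MS -> (y <= h)%MS -> br x y = 0)].

(* left-invariant connections = bilinear maps nab, nab x y = nabla_x y *)
Definition torsion (br nab : V -> V -> V) (x y : V) : V :=
  nab x y - nab y x - br x y.

(* Chern connection: nabla J = 0, nabla g = 0, (1,1)-part of torsion
   vanishes, i.e. T(Jx,Jy) = -T(x,y). *)
Definition chern_connection (br : V -> V -> V) (J G : 'M[R]_m)
    (nab : V -> V -> V) :=
  [/\ bilinear_map nab,
      (forall x y, nab x (y *m J) = nab x y *m J),
      (forall x y z, ip G (nab x y) z + ip G y (nab x z) = 0) &
      (forall x y, torsion br nab (x *m J) (y *m J) + torsion br nab x y = 0)].

Definition flat (br nab : V -> V -> V) :=
  forall x y z, nab x (nab y z) - nab y (nab x z) - nab (br x y) z = 0.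

(* complexification g_C = V + i V, elements represented as pairs (re, im) *)
Definition iC : C := Complex 0 1.
Definition rC (a : R) : C := Complex a 0.

(* complex-bilinear extension of g *)
Definition gC (G : 'M[R]_m) (X Y : V * V) : C :=
  rC (ip G X.1 Y.1 - ip G X.2 Y.2) + iC * rC (ip G X.1 Y.2 + ip G X.2 Y.1).

(* x - i Jx  (an element of g^{1,0}) and its conjugate x + i Jx *)
Definition e10 (J : 'M[R]_m) (x : V) : V * V := (x, - (x *m J)).
Definition e01 (J : 'M[R]_m) (x : V) : V * V := (x, x *m J).

(* complex-valued 1-forms are given by their (R-linear) values on real
   vectors; complex-linear extension to g_C *)
Definition rlinear (f : V -> C) :=
  forall (a : R) x y, f (a *: x + y) = rC a * f x + f y.
Definition formC (f : V -> C) (X : V * V) : C := f X.1 + iC * f X.2.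

(* wedge product of two complex 1-forms, evaluated on real vectors
   (a complex 2-form on g_C is determined by its values on V x V) *)
Definition wedge (f g : V -> C) (x y : V) : C := f x * g y - f y * g x.

Definition cjf (f : V -> C) : V -> C := fun x => conjc (f x).

End Hermitian.

Definition adjmx (R : rcfType) k (A : 'M[R[i]]_k) : 'M[R[i]]_k :=
  (map_mx (@conjc R) A)^T.

(* Admissible frame: frame e_i = a_i - i J a_i (i : 'I_(k.+1), index 0 is
   e_1, index lift ord0 j is e_{j+2}), dual coframe phi, data lam, v, A
   (A j l = A_{j+2,l+2}, v 0 j = v_{j+2}).  Left-invariant forms satisfy
   d phi (x,y) = - phi([x,y]). *)
Definition admissible_frame (R : rcfType) (k : nat)
    (br : 'rV[R]_((k.+1).*2) -> 'rV[R]_((k.+1).*2) -> 'rV[R]_((k.+1).*2))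
    (J G : 'M[R]_((k.+1).*2))
    (a : 'I_k.+1 -> 'rV[R]_((k.+1).*2))
    (phi : 'I_k.+1 -> 'rV[R]_((k.+1).*2) -> R[i])
    (lam : R) (v : 'rV[R[i]]_k) (A : 'M[R[i]]_k) :=
  (forall i j, gC G (e10 J (a i)) (e01 J (a j)) = (i == j)%:R) /\
  [/\
      (forall i, rlinear (phi i)),
      (forall i j, formC (phi i) (e10 J (a j)) = (i == j)%:R),
      (forall i j, formC (phi i) (e01 J (a j)) = 0),
      (* d phi_1 = - lam phi_1 /\ bar phi_1 *)
      (forall x y, - phi ord0 (br x y)
                   = - rC lam * wedge (phi ord0) (cjf (phi ord0)) x y) &
      (* d phi_i = - bar v_i phi_1 /\ bar phi_1
                   + sum_j bar A_ij (phi_1 + bar phi_1) /\ phi_j *)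
      (forall (i : 'I_k) x y, - phi (lift ord0 i) (br x y)
          = - conjc (v 0 i) * wedge (phi ord0) (cjf (phi ord0)) x y
            + \sum_(j < k) conjc (A i j) *
                wedge (fun z => phi ord0 z + cjf (phi ord0) z)
                      (phi (lift ord0 j)) x y)].

(* Everything is computed in the complex coframe phi_1, ..., phi_n dual to
   the unitary frame e_i = a_i - i J a_i of g^{1,0}:
   - the coframe identifies g with C^n: phi_i(a_j) = delta_ij / 2 and
     phi_i(J a_j) = i delta_ij / 2, so (a_j, J a_j) is a real basis, a vector
     is determined by its coordinates, and phi_i(Jx) = i phi_i(x); moreover
     g(w, a_l) = Re phi_l(w) and g(w, J a_l) = Im phi_l(w);
   - metric compatibility makes the connection matrix skew-Hermitian, and the
     torsion condition computes phi_k(nab_x y) + i phi_k(nab_{Jx} y) from the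
     structure equations; together they give the connection matrix
     Gamma(x) = conj(phi_1 x) N + phi_1(x) M with constant matrices N and
     M = - N^*;
   - the curvature is then R(x,y) = omega(x,y) K with omega = phi_1 /\ bar
     phi_1 and K = [M, N] - lam (M - N), so the connection is flat iff K = 0;
   - finally K_11 = -(|v|^2 + 2 lam^2) and, once lam = v = 0, the lower block
     of K is [A, A^*]; this gives both directions of the theorem. *)
From Pilot Require Import Defs.
From HB Require Import structures.
From mathcomp Require Import all_boot all_order all_algebra.
From mathcomp Require Import complex ring lra.
Set Implicit Arguments. Unset Strict Implicit. Unset Printing Implicit Defensive.
Import Order.TTheory GRing.Theory Num.Theory.
Local Open Scope ring_scope.
Local Open Scope complex_scope.

Section BilinearMap.
Variables (R : rcfType) (m : nat) (f : 'rV[R]_m -> 'rV[R]_m -> 'rV[R]_m).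
Hypothesis f_bilin : bilinear_map f.

Lemma bilin0l z : f 0 z = 0.
Proof.
have := (proj1 f_bilin) 1 0 0 z; rewrite !scale1r addr0 => E.
by apply: (@addrI _ (f 0 z)); rewrite addr0 -E.
Qed.

Lemma bilin0r z : f z 0 = 0.
Proof.
have := (proj2 f_bilin) 1 0 0 z; rewrite !scale1r addr0 => E.
by apply: (@addrI _ (f z 0)); rewrite addr0 -E.
Qed.

Lemma bilinDr x y z : f z (x + y) = f z x + f z y.
Proof. by rewrite -[x]scale1r (proj2 f_bilin) !scale1r. Qed.

Lemma bilinZl c x z : f (c *: x) z = c *: f x z.
Proof. by rewrite -[c *: x]addr0 (proj1 f_bilin) bilin0l addr0. Qed.

Lemma bilinZr c x z : f z (c *: x) = c *: f z x.
Proof. by rewrite -[c *: x]addr0 (proj2 f_bilin) bilin0r addr0. Qed.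

Lemma bilinNl x z : f (- x) z = - f x z.
Proof. by rewrite -scaleN1r bilinZl scaleN1r. Qed.

Lemma bilinNr x z : f z (- x) = - f z x.
Proof. by rewrite -scaleN1r bilinZr scaleN1r. Qed.

Lemma bilin_sumr (I : finType) x (F : I -> 'rV[R]_m) :
  f x (\sum_i F i) = \sum_i f x (F i).
Proof. exact: (big_morph (f x) (fun u w => bilinDr u w x) (bilin0r x)). Qed.

End BilinearMap.

Section ComplexArith.
Variable R : rcfType.
Local Notation C := R[i].

Lemma complex_eq_parts (a b c d : R) : a +i* b = c +i* d -> a = c /\ b = d.
Proof. by case. Qed.

Lemma rC0 : rC 0 = 0 :> C. Proof. by []. Qed.
Lemma rC1 : rC 1 = 1 :> C. Proof. by []. Qed.
Lemma rCN1 : rC (-1) = -1 :> C.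
Proof. by rewrite /rC -[-1 : C]/(- (1 +i* 0)); simpc. Qed.
Lemma conjc_rC (c : R) : conjc (rC c) = rC c. Proof. by rewrite /rC; simpc. Qed.
Lemma conjcM (p q : C) : conjc (p * q) = conjc p * conjc q. Proof. exact: rmorphM. Qed.
Lemma conjcN (p : C) : conjc (- p) = - conjc p. Proof. exact: rmorphN. Qed.
Lemma rC_nat (b : bool) : (b%:R : C) = rC b%:R. Proof. by case: b. Qed.

Lemma solve_conj_pair (p q : C) (d : R) :
  p - iC R * q = rC d -> p + iC R * q = 0 ->
  p = rC (d / 2) /\ q = iC R * rC (d / 2).
Proof.
case: p => p1 p2; case: q => q1 q2; rewrite /iC /rC; simpc.
move=> /complex_eq_parts [h1 h2] /complex_eq_parts [h3 h4].
by split; congr (_ +i* _); lra.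
Qed.

End ComplexArith.

Lemma sum_norm2_eq0 (R : rcfType) (k : nat) (v : 'rV[R[i]]_k) (lam : R) :
  \sum_j v 0 j * conjc (v 0 j) + rC (2 * lam ^+ 2) = 0 -> lam = 0 /\ v = 0.
Proof.
have vv_ge0 j : 0 <= v 0 j * conjc (v 0 j) by exact: mulcJ_ge0.
have sum_ge0 : 0 <= \sum_j v 0 j * conjc (v 0 j) by apply: sumr_ge0.
have lam_ge0 : 0 <= rC (2 * lam ^+ 2) by rewrite ler0c mulr_ge0 // sqr_ge0.
move/eqP; rewrite (paddr_eq0 sum_ge0 lam_ge0) => /andP [/eqP sum0 /eqP lam0].
split.
  move: lam0; rewrite /rC -[0 : R[i]]/(0 +i* 0) => /complex_eq_parts [lam0 _].
  by apply/eqP; rewrite -sqrf_eq0; apply/eqP; lra.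
apply/rowP => j; rewrite [RHS]mxE.
have /eqP := @psumr_eq0P _ _ xpredT _ (fun j _ => vv_ge0 j) sum0 j isT.
by rewrite mulf_eq0 conjc_eq0 orbb => /eqP.
Qed.

Lemma commutator_adj_entry (R : rcfType) (k : nat) (A : 'M[R[i]]_k) l j :
  (A *m adjmx A) l j - (adjmx A *m A) l j
  = \sum_r (conjc (A j r) * A l r - A r j * conjc (A r l)).
Proof. by rewrite !mxE -sumrB; apply: eq_bigr => r _; rewrite /adjmx !mxE; ring. Qed.

Section RealLinearForm.
Variables (R : rcfType) (m : nat) (f : 'rV[R]_m -> R[i]).
Hypothesis f_lin : rlinear f.

Lemma form0 : f 0 = 0.
Proof.
have := f_lin 1 0 0; rewrite scale1r addr0 rC1 mul1r => E.
by apply: (@addrI _ (f 0)); rewrite addr0 -E.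
Qed.

Lemma formD x y : f (x + y) = f x + f y.
Proof. by rewrite -{1}[x]scale1r f_lin rC1 mul1r. Qed.

Lemma formZ c x : f (c *: x) = rC c * f x.
Proof. by rewrite -[c *: x]addr0 f_lin form0 addr0. Qed.

Lemma formN x : f (- x) = - f x.
Proof. by rewrite -scaleN1r formZ rCN1 mulN1r. Qed.

Lemma formB x y : f (x - y) = f x - f y.
Proof. by rewrite formD formN. Qed.

Lemma form_sum (I : finType) (F : I -> 'rV[R]_m) :
  f (\sum_i F i) = \sum_i f (F i).
Proof. exact: (big_morph f formD form0). Qed.

End RealLinearForm.

Section GramForm.
Variables (R : rcfType) (m : nat) (G : 'M[R]_m).

Lemma ipDl x y z : ip G (x + y) z = ip G x z + ip G y z.
Proof. by rewrite /ip !mulmxDl mxE. Qed.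

Lemma ipZl c x z : ip G (c *: x) z = c * ip G x z.
Proof. by rewrite /ip -!scalemxAl mxE. Qed.

Lemma ipNl x z : ip G (- x) z = - ip G x z.
Proof. by rewrite -scaleN1r ipZl mulN1r. Qed.

Lemma ip0l z : ip G 0 z = 0.
Proof. by rewrite /ip !mul0mx mxE. Qed.

Lemma ip_suml (I : finType) (F : I -> 'rV[R]_m) z :
  ip G (\sum_i F i) z = \sum_i ip G (F i) z.
Proof. exact: (big_morph (ip G ^~ z) (fun x y => ipDl x y z) (ip0l z)). Qed.

Lemma ip_sym : G^T = G -> forall x y, ip G x y = ip G y x.
Proof.
move=> G_sym x y; rewrite /ip.
transitivity ((x *m G *m y^T)^T 0 0); first by rewrite [RHS]mxE.
by rewrite !trmx_mul trmxK G_sym mulmxA.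
Qed.

End GramForm.

(* Only the
   bilinearity of the bracket, the algebraic properties of J and g, the
   admissible frame and the defining properties of the Chern connection are
   used; the Jacobi identity, almost abelianness and positivity of g are not. *)
Section ChernCurvature.
Variables (R : rcfType) (k : nat).
Local Notation n := k.+1.
Local Notation m := (k.+1).*2.
Local Notation V := 'rV[R]_m.
Local Notation C := R[i].
Local Notation iC := (iC R).
Variables (br : V -> V -> V) (J G : 'M[R]_m) (a : 'I_n -> V)
  (phi : 'I_n -> V -> C) (lam : R) (v : 'rV[C]_k) (A : 'M[C]_k)
  (nab : V -> V -> V).
Hypothesis br_bilin : bilinear_map br.
Hypothesis J2 : J *m J = - 1%:M.
Hypothesis G_sym : G^T = G.
Hypothesis G_J : forall x y, ip G (x *m J) (y *m J) = ip G x y.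
Hypothesis frame_unitary :
  forall i j, gC G (e10 J (a i)) (e01 J (a j)) = (i == j)%:R.
Hypothesis phi_lin : forall i, rlinear (phi i).
Hypothesis phi_dual10 : forall i j, Defs.formC (phi i) (e10 J (a j)) = (i == j)%:R.
Hypothesis phi_dual01 : forall i j, Defs.formC (phi i) (e01 J (a j)) = 0.
Hypothesis struct_eq1 : forall x y, - phi ord0 (br x y)
  = - rC lam * wedge (phi ord0) (cjf (phi ord0)) x y.
Hypothesis struct_eq : forall (i : 'I_k) x y, - phi (lift ord0 i) (br x y)
  = - conjc (v 0 i) * wedge (phi ord0) (cjf (phi ord0)) x y
    + \sum_(j < k) conjc (A i j) *
        wedge (fun z => phi ord0 z + cjf (phi ord0) z) (phi (lift ord0 j)) x y.
Hypothesis nab_bilin : bilinear_map nab.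
Hypothesis nab_J : forall x y, nab x (y *m J) = nab x y *m J.
Hypothesis nab_g : forall x y z, ip G (nab x y) z + ip G y (nab x z) = 0.
Hypothesis nab_torsion :
  forall x y, torsion br nab (x *m J) (y *m J) + torsion br nab x y = 0.

Lemma phi0 i : phi i 0 = 0. Proof. exact: form0. Qed.
Lemma phiD i x y : phi i (x + y) = phi i x + phi i y. Proof. exact: formD. Qed.
Lemma phiB i x y : phi i (x - y) = phi i x - phi i y. Proof. exact: formB. Qed.
Lemma phiN i x : phi i (- x) = - phi i x. Proof. exact: formN. Qed.
Lemma phiZ i c x : phi i (c *: x) = rC c * phi i x. Proof. exact: formZ. Qed.

Lemma JJ (w : V) : w *m J *m J = - w.
Proof. by rewrite -mulmxA J2 mulmxN mulmx1. Qed.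

Lemma phi_frame i j : phi i (a j) = rC ((i == j)%:R / 2) /\
  phi i (a j *m J) = iC * rC ((i == j)%:R / 2).
Proof.
apply: solve_conj_pair.
  have := phi_dual10 i j; rewrite /Defs.formC /e10 /= phiN mulrN => ->.
  by case: (i == j).
by have := phi_dual01 i j; rewrite /Defs.formC /e01.
Qed.

Lemma phi_a i j : phi i (a j) = rC ((i == j)%:R / 2).
Proof. by case: (phi_frame i j). Qed.

Lemma phi_aJ i j : phi i (a j *m J) = iC * rC ((i == j)%:R / 2).
Proof. by case: (phi_frame i j). Qed.

Lemma phi_a_neq i j : i != j -> phi i (a j) = 0.
Proof. by move=> /negbTE ij; rewrite phi_a ij mul0r rC0. Qed.

Lemma phi_comb i (c d : 'I_n -> R) :
  phi i (\sum_j (c j *: a j + d j *: (a j *m J)))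
  = rC (c i / 2) + iC * rC (d i / 2).
Proof.
rewrite form_sum // (bigD1 i) //= big1 => [|j /negbTE ji]; last first.
  rewrite phiD !phiZ phi_a phi_aJ eq_sym ji /rC /iC -[0 : C]/(0 +i* 0); simpc.
  by congr (_ +i* _); ring.
rewrite phiD !phiZ phi_a phi_aJ eqxx addr0 /rC /iC; simpc.
by congr (_ +i* _); ring.
Qed.

(* (a_j, J a_j) is a real basis: it is free by phi_comb, hence spans the
   2n-dimensional space V. *)
Lemma frame_spans x :
  exists c d : 'I_n -> R, x = \sum_j (c j *: a j + d j *: (a j *m J)).
Proof.
pose B := col_mx (\matrix_(j < n) a j) (\matrix_(j < n) (a j *m J)).
have B_comb (u : 'rV_(n + n)) :
    u *m B = \sum_j (lsubmx u 0 j *: a j + rsubmx u 0 j *: (a j *m J)).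
  rewrite -{1}[u]hsubmxK mul_row_col !mulmx_sum_row big_split /=.
  by congr (_ + _); apply: eq_bigr => j _; rewrite rowK.
have B_free : row_free B.
  apply: inj_row_free => u uB0.
  have u0 j : lsubmx u 0 j = 0 /\ rsubmx u 0 j = 0.
    move: (congr1 (phi j) uB0); rewrite B_comb phi_comb phi0 /rC /iC.
    rewrite -[0 : C]/(0 +i* 0); simpc => /complex_eq_parts [h1 h2].
    by split; lra.
  rewrite -[u]hsubmxK.
  have -> : lsubmx u = 0 by apply/rowP => j; rewrite [RHS]mxE; exact: (u0 j).1.
  have -> : rsubmx u = 0 by apply/rowP => j; rewrite [RHS]mxE; exact: (u0 j).2.
  by rewrite row_mx0.
have B_full : row_full B by rewrite /row_full; move/eqP: B_free => ->; rewrite addnn.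
have /submxP [D ->] : (x <= B)%MS by apply: submx_full.
by exists (lsubmx D 0), (rsubmx D 0); rewrite B_comb.
Qed.

Lemma frame_expand x : x = \sum_j ((2 * complex.Re (phi j x) : R) *: a j
                            + (2 * complex.Im (phi j x) : R) *: (a j *m J)).
Proof.
have [c [d Ex]] := frame_spans x.
have cd j : 2 * complex.Re (phi j x) = c j /\ 2 * complex.Im (phi j x) = d j.
  by rewrite Ex phi_comb /rC /iC; simpc => /=; split; field.
by rewrite {1}Ex; apply: eq_bigr => j _; rewrite (cd j).1 (cd j).2.
Qed.

Lemma phi_inj x y : (forall j, phi j x = phi j y) -> x = y.
Proof.
by move=> E; rewrite (frame_expand x) (frame_expand y); apply: eq_bigr => j _; rewrite E.
Qed.

Lemma phiJ i x : phi i (x *m J) = iC * phi i x.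
Proof.
rewrite {1}(frame_expand x) mulmx_suml.
under eq_bigr => j _ do rewrite mulmxDl -!scalemxAl JJ scalerN -scaleNr addrC.
rewrite phi_comb; case: (phi i x) => p q; rewrite /rC /iC /=; simpc.
by congr (_ +i* _); field.
Qed.

Lemma ip_frame i j :
  ip G (a i) (a j) = (i == j)%:R / 2 /\ ip G (a i) (a j *m J) = 0.
Proof.
have := frame_unitary i j; rewrite /gC /e10 /e01 /= !ipNl opprK.
have -> : ip G (a i *m J) (a j) = - ip G (a i) (a j *m J).
  by rewrite -G_J JJ ipNl.
rewrite G_J rC_nat /rC /iC; simpc => /complex_eq_parts [h1 h2].
by split; lra.
Qed.

Lemma ip_coords w l :
  ip G w (a l) = complex.Re (phi l w) /\ ip G w (a l *m J) = complex.Im (phi l w).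
Proof.
have aa i j := (ip_frame i j).1; have aaJ i j := (ip_frame i j).2.
have aJa i j : ip G (a i *m J) (a j) = 0 by rewrite ip_sym // aaJ.
have aJaJ i j : ip G (a i *m J) (a j *m J) = (i == j)%:R / 2 by rewrite G_J aa.
split; rewrite {1}(frame_expand w) ip_suml.
  rewrite (bigD1 l) //= big1 => [|j /negbTE jl];
    by rewrite ipDl !ipZl aa aJa ?eqxx ?jl /= ?addr0; field.
rewrite (bigD1 l) //= big1 => [|j /negbTE jl];
  by rewrite ipDl !ipZl aaJ aJaJ ?eqxx ?jl /= ?addr0; field.
Qed.

(* Metric compatibility: the connection matrix on the frame is skew-Hermitian. *)
Lemma conn_skew x l j : phi l (nab x (a j)) = - conjc (phi j (nab x (a l))).
Proof.
have E1 := nab_g x (a j) (a l).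
have E2 := nab_g x (a j *m J) (a l).
rewrite (ip_coords _ l).1 [ip G (a j) _]ip_sym // (ip_coords _ j).1 in E1.
rewrite nab_J (ip_coords _ l).1 phiJ [ip G (a j *m J) _]ip_sym //
  (ip_coords _ j).2 in E2.
move: E1 E2; case: (phi l (nab x (a j))) => z1 z2; case: (phi j (nab x (a l))) => w1 w2.
by rewrite /iC /=; simpc => /= E1 E2; congr (_ +i* _); lra.
Qed.

(* The (1,1)-part of the torsion vanishes: nab_x y + i nab_{Jx} y is
   determined by brackets. *)
Lemma torsion_combination x y i :
  2 * (phi i (nab x y) + iC * phi i (nab (x *m J) y)) =
  phi i (br x y + br (x *m J) (y *m J)) - iC * phi i (br x (y *m J) - br (x *m J) y).
Proof.
have E1 := congr1 (phi i) (nab_torsion x y).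
have E2 := congr1 (phi i) (nab_torsion x (y *m J)).
rewrite /torsion JJ (bilinNr nab_bilin) (bilinNl nab_bilin) (bilinNr br_bilin) in E2.
rewrite /torsion !nab_J in E1 E2.
rewrite !(phiD, phiB, phiN, phiJ, phi0) in E1 E2.
rewrite !(phiD, phiB, phiN).
move: E1 E2.
move: (phi i (nab x y)) (phi i (nab (x *m J) y)) (phi i (nab y x))
  (phi i (nab (y *m J) x)) (phi i (br x y)) (phi i (br (x *m J) (y *m J)))
  (phi i (br x (y *m J))) (phi i (br (x *m J) y))
  => [p1 p2] [q1 q2] [r1 r2] [s1 s2] [t1 t2] [u1 u2] [w1 w2] [z1 z2].
rewrite /iC -[0 : C]/(0 +i* 0); simpc.
move=> /complex_eq_parts [h1 h2] /complex_eq_parts [h3 h4].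
by simpc; congr (_ +i* _); lra.
Qed.

Definition omega x y := phi ord0 x * conjc (phi ord0 y) - phi ord0 y * conjc (phi ord0 x).

Definition Aform (j : 'I_k) (y : V) : C :=
  \sum_(l < k) conjc (A j l) * phi (lift ord0 l) y.

Lemma phi0_bracket x y : phi ord0 (br x y) = rC lam * omega x y.
Proof. by apply: oppr_inj; rewrite struct_eq1 mulNr. Qed.

Lemma phiS_bracket j x y : phi (lift ord0 j) (br x y) = conjc (v 0 j) * omega x y -
  ((phi ord0 x + conjc (phi ord0 x)) * Aform j y
   - (phi ord0 y + conjc (phi ord0 y)) * Aform j x).
Proof.
apply: oppr_inj; rewrite struct_eq /wedge /cjf /= opprB [RHS]addrC mulNr.
congr (_ + _); rewrite /Aform !mulr_sumr -sumrB; apply: eq_bigr => l _; ring.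
Qed.

Lemma AformJ j y : Aform j (y *m J) = iC * Aform j y.
Proof. by rewrite /Aform mulr_sumr; apply: eq_bigr => l _; rewrite phiJ; ring. Qed.

(* The row N_k of the connection: phi_k(nab_x y) + i phi_k(nab_{Jx} y)
   = conj(phi_1 x) N_k(y)  (lemma conn_10). *)
Definition Nform (kk : 'I_n) (y : V) : C :=
  match unlift ord0 kk with
  | None => -2 * rC lam * phi ord0 y
  | Some j => -2 * (conjc (v 0 j) * phi ord0 y + Aform j y)
  end.

Lemma bracket_combination x y kk :
  phi kk (br x y + br (x *m J) (y *m J)) - iC * phi kk (br x (y *m J) - br (x *m J) y)
  = 2 * conjc (phi ord0 x) * Nform kk y.
Proof.
rewrite !(phiD, phiB, phiN); case: (unliftP ord0 kk) => [j ->|->]; rewrite /Nform.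
  rewrite liftK !phiS_bracket /omega !phiJ !AformJ.
  move: (phi ord0 x) (phi ord0 y) (Aform j x) (Aform j y) (conjc (v 0 j))
    => [p1 p2] [q1 q2] [r1 r2] [s1 s2] [t1 t2].
  by rewrite /iC; simpc; congr (_ +i* _); ring.
rewrite unlift_none !phi0_bracket /omega !phiJ.
move: (phi ord0 x) (phi ord0 y) => [p1 p2] [q1 q2].
by rewrite /iC /rC; simpc; congr (_ +i* _); ring.
Qed.

Lemma conn_10 x y kk :
  phi kk (nab x y) + iC * phi kk (nab (x *m J) y) = conjc (phi ord0 x) * Nform kk y.
Proof.
apply: (@mulfI _ 2); first by rewrite pnatr_eq0.
by rewrite torsion_combination bracket_combination mulrA.
Qed.

Definition Nmat (kk l : 'I_n) : C := Nform kk (a l).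
Definition Mmat (kk l : 'I_n) : C := - conjc (Nmat l kk).
Definition conn x (kk l : 'I_n) : C :=
  conjc (phi ord0 x) * Nmat kk l + phi ord0 x * Mmat kk l.

(* conn_10 together with skew-Hermitian symmetry determines nab on the frame. *)
Lemma conn_frame x kk l : 2 * phi kk (nab x (a l)) = conn x kk l.
Proof.
have S1 := conn_10 x (a l) kk.
have S3 := conn_10 x (a kk) l.
rewrite (conn_skew x l kk) (conn_skew (x *m J) l kk) in S3.
rewrite /conn /Mmat /Nmat; move: S1 S3.
move: (phi kk (nab x (a l))) (phi kk (nab (x *m J) (a l))) (phi ord0 x)
  (Nform kk (a l)) (Nform l (a kk)) => [p1 p2] [q1 q2] [r1 r2] [s1 s2] [t1 t2].
rewrite /iC; simpc => /complex_eq_parts [h1 h2] /complex_eq_parts [h3 h4].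
by congr (_ +i* _); lra.
Qed.

Lemma nab_coords x y kk : phi kk (nab x y) = \sum_l conn x kk l * phi l y.
Proof.
rewrite {1}(frame_expand y) bilin_sumr // form_sum //; apply: eq_bigr => l _.
rewrite (bilinDr nab_bilin) !(bilinZr nab_bilin) nab_J phiD !phiZ phiJ -conn_frame.
move: (phi kk (nab x (a l))) (phi l y) => [p1 p2] [z1 z2] /=.
by rewrite /iC /rC; simpc; congr (_ +i* _); ring.
Qed.

Lemma nab2_coords x y z kk :
  phi kk (nab x (nab y z)) = \sum_r \sum_l conn x kk l * (conn y l r * phi r z).
Proof.
rewrite nab_coords exchange_big /=; apply: eq_bigr => l _.
by rewrite nab_coords mulr_sumr.
Qed.

Definition Kmat (kk r : 'I_n) : C :=
  \sum_l (Mmat kk l * Nmat l r - Nmat kk l * Mmat l r) - rC lam * (Mmat kk r - Nmat kk r).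

Lemma omega_conj x y : conjc (omega x y) = - omega x y.
Proof.
rewrite /omega; move: (phi ord0 x) (phi ord0 y) => [p1 p2] [q1 q2].
by simpc; congr (_ +i* _); ring.
Qed.

Lemma curvature_coords x y z kk :
  phi kk (nab x (nab y z) - nab y (nab x z) - nab (br x y) z)
  = omega x y * \sum_r Kmat kk r * phi r z.
Proof.
rewrite !phiB !nab2_coords nab_coords -!sumrB mulr_sumr; apply: eq_bigr => r _.
rewrite /Kmat [(_ - _) * phi r z]mulrBl mulr_suml [omega x y * _]mulrBr mulr_sumr.
rewrite -sumrB; congr (_ - _); first by apply: eq_bigr => l _; rewrite /conn /omega; ring.
by rewrite /conn phi0_bracket conjcM conjc_rC omega_conj; ring.
Qed.

(* Flatness is the vanishing of K: omega(a_1, J a_1) = -i/2 is nonzero. *)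
Lemma flat_Kmat : flat br nab <-> forall kk r, Kmat kk r = 0.
Proof.
split=> [flat_nab kk r | K0 x y z]; last first.
  apply: phi_inj => kk; rewrite curvature_coords phi0 big1 ?mulr0 // => r _.
  by rewrite K0 mul0r.
have := congr1 (phi kk) (flat_nab (a ord0) (a ord0 *m J) (a r)).
rewrite curvature_coords phi0 (bigD1 r) //= big1 => [|r' r'r]; last first.
  by rewrite phi_a_neq ?mulr0.
rewrite phi_a eqxx addr0 /omega !phi_a !phi_aJ eqxx /=.
move: (Kmat kk r) => [p q]; rewrite /rC /iC -[0 : C]/(0 +i* 0); simpc.
by move=> /complex_eq_parts [h1 h2]; congr (_ +i* _); lra.
Qed.

Lemma Nmat00 : Nmat ord0 ord0 = - rC lam.
Proof.
by rewrite /Nmat /Nform unlift_none phi_a eqxx /= /rC; simpc; congr (_ +i* _); field.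
Qed.

Lemma Nmat0S l : Nmat ord0 (lift ord0 l) = 0.
Proof. by rewrite /Nmat /Nform unlift_none phi_a_neq ?neq_lift // mulr0. Qed.

Lemma Aform_a0 j : Aform j (a ord0) = 0.
Proof.
by rewrite /Aform big1 // => l _; rewrite phi_a_neq 1?eq_sym ?neq_lift // mulr0.
Qed.

Lemma Aform_aS j l : Aform j (a (lift ord0 l)) = conjc (A j l) * rC (1 / 2).
Proof.
rewrite /Aform (bigD1 l) //= big1 => [|l' l'l]; first by rewrite phi_a eqxx addr0.
by rewrite phi_a_neq ?mulr0 // (inj_eq (@lift_inj _ ord0)).
Qed.

Lemma NmatS0 j : Nmat (lift ord0 j) ord0 = - conjc (v 0 j).
Proof.
rewrite /Nmat /Nform liftK phi_a eqxx Aform_a0 addr0 /=.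
by move: (conjc (v 0 j)) => [p q]; rewrite /rC; simpc; congr (_ +i* _); field.
Qed.

Lemma NmatSS j l : Nmat (lift ord0 j) (lift ord0 l) = - conjc (A j l).
Proof.
rewrite /Nmat /Nform liftK phi_a_neq 1?eq_sym ?neq_lift // Aform_aS mulr0 add0r.
by move: (conjc (A j l)) => [p q]; rewrite /rC; simpc; congr (_ +i* _); field.
Qed.

Lemma Kmat00 : Kmat ord0 ord0 = - (\sum_j v 0 j * conjc (v 0 j) + rC (2 * lam ^+ 2)).
Proof.
rewrite /Kmat big_ord_recl.
rewrite (eq_bigr (fun j => - (v 0 j * conjc (v 0 j)))) => [|j _]; last first.
  by rewrite /Mmat NmatS0 Nmat0S conjcN conjcK conjc0; ring.
rewrite sumrN /Mmat Nmat00; move: (\sum_(i < k) _) => [s1 s2].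
by rewrite /rC; simpc; congr (_ +i* _); ring.
Qed.

Lemma KmatSS j l : Kmat (lift ord0 j) (lift ord0 l) = conjc (v 0 j) * v 0 l
  + \sum_r (conjc (A j r) * A l r - A r j * conjc (A r l))
  - rC lam * (A l j + conjc (A j l)).
Proof.
rewrite /Kmat big_ord_recl.
rewrite (eq_bigr (fun r => conjc (A j r) * A l r - A r j * conjc (A r l))) => [|r _].
  by rewrite /Mmat !NmatSS !NmatS0 !Nmat0S !conjcN !conjcK; ring.
by rewrite /Mmat /bump /= !NmatSS !conjcN !conjcK; ring.
Qed.

Lemma Kmat_eq0 :
  (forall kk r, Kmat kk r = 0) <-> [/\ lam = 0, v = 0 & A *m adjmx A = adjmx A *m A].
Proof.
split=> [K0 | [lam0 v0 AA] kk r].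
  have [lam0 v0] : lam = 0 /\ v = 0.
    by apply: sum_norm2_eq0; apply: oppr_inj; rewrite -Kmat00 K0 oppr0.
  split=> //; apply/matrixP => l j; apply/eqP; rewrite -subr_eq0 commutator_adj_entry.
  have := K0 (lift ord0 j) (lift ord0 l).
  by rewrite KmatSS v0 lam0 !mxE conjc0 mul0r add0r rC0 mul0r subr0 => ->.
have vj0 j : v 0 j = 0 by rewrite v0 mxE.
have N_col0 s : Nmat s ord0 = 0.
  by case: (unliftP ord0 s) => [j ->|->]; rewrite ?NmatS0 ?vj0 ?conjc0 ?Nmat00 ?lam0 ?rC0 oppr0.
have N_row0 s : Nmat ord0 s = 0.
  by case: (unliftP ord0 s) => [j ->|->]; rewrite ?Nmat0S // Nmat00 lam0 rC0 oppr0.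
case: (unliftP ord0 kk) => [j ->|->]; last first.
  rewrite /Kmat /Mmat big1 => [|l _]; last by rewrite N_col0 N_row0 conjc0 oppr0 !mul0r subrr.
  by rewrite lam0 rC0 mul0r subr0.
case: (unliftP ord0 r) => [l ->|->]; last first.
  rewrite /Kmat /Mmat big1 => [|l _]; last by rewrite N_col0 N_row0 conjc0 oppr0 !mulr0 subrr.
  by rewrite lam0 rC0 mul0r subr0.
by rewrite KmatSS vj0 conjc0 mul0r add0r lam0 rC0 mul0r subr0 -commutator_adj_entry AA subrr.
Qed.

Lemma chern_flat_iff :
  flat br nab <-> [/\ lam = 0, v = 0 & A *m adjmx A = adjmx A *m A].
Proof. exact: iff_trans flat_Kmat Kmat_eq0. Qed.

End ChernCurvature.

Theorem lemma6 (R : rcfType) (k : nat)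
    (br : 'rV[R]_((k.+1).*2) -> 'rV[R]_((k.+1).*2) -> 'rV[R]_((k.+1).*2))
    (J G : 'M[R]_((k.+1).*2))
    (a : 'I_k.+1 -> 'rV[R]_((k.+1).*2))
    (phi : 'I_k.+1 -> 'rV[R]_((k.+1).*2) -> R[i])
    (lam : R) (v : 'rV[R[i]]_k) (A : 'M[R[i]]_k)
    (nab : 'rV[R]_((k.+1).*2) -> 'rV[R]_((k.+1).*2) -> 'rV[R]_((k.+1).*2)) :
  is_lie_bracket br ->
  almost_abelian br ->
  hermitian_structure br J G ->
  admissible_frame br J G a phi lam v A ->
  chern_connection br J G nab ->
  (flat br nab <-> [/\ lam = 0, v = 0 & A *m adjmx A = adjmx A *m A]).
Proof.
move=> [br_bilin _] _ [J2 _ G_sym _ G_J] [unitary [phi_lin dual10 dual01 eq1 eqS]].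
move=> [nab_bilin nab_J nab_g nab_torsion].
exact: (chern_flat_iff br_bilin J2 G_sym G_J unitary phi_lin dual10 dual01 eq1 eqS
          nab_bilin nab_J nab_g nab_torsion).
Qed.
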